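(* Let $0<m\le L$, $\kappa=L/m$, and let $\rho\in(0,1)$ satisfy $T_s=1/(1-\rho)\ge(\sqrt\kappa+1)/2$. Let $c=\dfrac{\kappa-(1+\rho)/(1-\rho)}{\rho\,(\kappa+(1+\rho)/(1-\rho))}$. Then $c\in[-1,1]$, the two-step momentum algorithm with parameters $\alpha=(1+\rho)(1+c\rho)/L$, $\beta=c\rho^2$, $\gamma=0$ achieves convergence rate $\rho$ for all $f\in\mathcal{Q}_m^L$, and $$\hat J_{\max}:=\max_{\lambda\in[m,L]}\hat J(\lambda)=\hat J(m)=\hat J(L)=\frac{\sigma_w^2(\kappa+1)}{2(1-c\rho^2)(1+\rho)(1+c\rho)},$$ $$\hat J_{\min}:=\min_{\lambda\in[m,L]}\hat J(\lambda)=\hat J(\hat\lambda)=\frac{\sigma_w^2}{(1+c\rho^2)(1-c\rho^2)},\qquad \hat\lambda=(m+L)/2.$$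
   Context: $\mathcal{Q}_m^L$ is the class of quadratic functions $f(x)=\tfrac12x^TQx-q^Tx$ on $\mathbb{R}^n$ with $q\in\mathbb{R}^n$, $Q=Q^T\succ0$ whose largest eigenvalue is $L$ and smallest is $m$. The two-step momentum algorithm is $x^{t+2}=x^{t+1}+\beta(x^{t+1}-x^t)-\alpha\nabla f\big(x^{t+1}+\gamma(x^{t+1}-x^t)\big)+\sigma_w w^t$ ($w^t$ white noise with zero mean and identity covariance, $\sigma_w\ge0$), with state matrix $A=\begin{bmatrix}0&I\\-\beta I+\gamma\alpha Q&(1+\beta)I-(1+\gamma)\alpha Q\end{bmatrix}$ on $\psi^t=[(x^t-x^\star)^T,(x^{t+1}-x^\star)^T]^T$; rate $\rho$ is achieved for all $f\in\mathcal{Q}_m^L$ if the spectral radius of $A$ is at most $\rho$ for every such $f$. For $\lambda>0$ let $a(\lambda)=\beta-\gamma\alpha\lambda$, $b(\lambda)=(1+\gamma)\alpha\lambda-(1+\beta)$, $d=a+b+1$, $l=a-b+1$, $h=1-a$ (evaluated at $\lambda$), and $\hat J(\lambda)=\sigma_w^2(d(\lambda)+l(\lambda))/(2d(\lambda)h(\lambda)l(\lambda))$ (the contribution of Hessian eigenvalue $\lambda$ to the steady-state variance of $x^t-x^\star$). *)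

From mathcomp Require Import all_boot all_order all_algebra.
From mathcomp Require Import complex.
Set Implicit Arguments. Unset Strict Implicit. Unset Printing Implicit Defensive.
Import Order.TTheory GRing.Theory Num.Theory.
Local Open Scope ring_scope.

Section Defs.
Variable R : rcfType.

(* Q is a symmetric positive definite n x n matrix whose (real) eigenvalues
   lie in [m, L], with m and L themselves eigenvalues: the smallest eigenvalue
   is m and the largest is L.  f(x) = 1/2 x^T Q x - q^T x. *)
Definition in_QmL (m L : R) (n : nat) (Q : 'M[R]_n) (q : 'cV[R]_n) : Prop :=
  [/\ Q^T = Q,
      (forall v : 'cV[R]_n, v != 0 -> 0 < (v^T *m Q *m v) 0 0),
      (forall lam : R, eigenvalue Q lam -> m <= lam <= L),
      eigenvalue Q m & eigenvalue Q L].

(* State matrix of the two-step momentum algorithm on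
   psi^t = [x^t - x*; x^{t+1} - x*]. *)
Definition state_mx (alpha beta gamma : R) (n : nat) (Q : 'M[R]_n)
  : 'M[R]_(n + n) :=
  block_mx 0 1%:M
           ((- beta)%:M + (gamma * alpha) *: Q)
           ((1 + beta)%:M - ((1 + gamma) * alpha) *: Q).

Definition spec_rad_le (n : nat) (A : 'M[R]_n) (rho : R) : Prop :=
  forall z : R[i], eigenvalue (map_mx (real_complex R) A) z -> Normc.normc z <= rho.

Definition achieves_rate (alpha beta gamma rho m L : R) : Prop :=
  forall (n : nat) (Q : 'M[R]_n) (q : 'cV[R]_n),
    in_QmL m L Q q -> spec_rad_le (state_mx alpha beta gamma Q) rho.

Definition a_ (alpha beta gamma lam : R) := beta - gamma * alpha * lam.
Definition b_ (alpha beta gamma lam : R) := (1 + gamma) * alpha * lam - (1 + beta).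
Definition d_ alpha beta gamma lam :=
  a_ alpha beta gamma lam + b_ alpha beta gamma lam + 1.
Definition l_ alpha beta gamma lam :=
  a_ alpha beta gamma lam - b_ alpha beta gamma lam + 1.
Definition h_ alpha beta gamma lam := 1 - a_ alpha beta gamma lam.

Definition Jhat (sigma_w alpha beta gamma lam : R) : R :=
  sigma_w ^+ 2 * (d_ alpha beta gamma lam + l_ alpha beta gamma lam)
  / (2 * d_ alpha beta gamma lam * h_ alpha beta gamma lam
       * l_ alpha beta gamma lam).

End Defs.

From mathcomp Require Import all_boot all_order all_algebra.
From mathcomp Require Import complex.
From mathcomp Require Import ring lra.
Set Implicit Arguments.
Unset Strict Implicit.
Unset Printing Implicit Defensive.

Import Order.TTheory GRing.Theory Num.Theory.
Local Open Scope ring_scope.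

(* With [gamma = 0], a nonzero eigenvalue [z] of the state matrix has a row eigenvector
   [[x y]] with [y] an eigenvector of [Q]; so [z] is a root of
   [z^2 + (alpha lam - (1 + beta)) z + beta] for an eigenvalue [lam] of [Q], which is real
   and lies in [[m, L]] because [Q] is symmetric.  The choice of [c] puts [alpha m] and
   [alpha L] symmetrically around [1 + beta], at distance [rho (1 + c)]; with [beta = c rho^2]
   this confines every such root to the disc of radius [rho].  The same symmetry governs the
   variance: [Jhat lam = sigma_w^2 (1 + beta) / ((1 - beta) ((1 + beta)^2 - e^2))] with
   [e = alpha lam - (1 + beta)], which increases with [|e|]; hence [Jhat] is largest at both
   ends of [[m, L]] and smallest at the midpoint, where [e = 0]. *)

Lemma eigenvalue_companion_block (F : fieldType) n (M : 'M[F]_n) (a b z : F) :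
  a != 0 -> z != 0 ->
  eigenvalue (block_mx 0 1%:M (- b)%:M ((1 + b)%:M - a *: M)) z ->
  exists2 mu, eigenvalue M mu & z ^+ 2 + (a * mu - (1 + b)) * z + b = 0.
Proof.
move=> a0 z0 /eigenvalueP[v]; rewrite -[v]hsubmxK.
move: (lsubmx v) (rsubmx v) => x y.
rewrite mul_row_block scale_row_mx => /eq_row_mx[Ex Ey] v0.
move: Ex; rewrite mulmx0 add0r mul_mx_scalar => Ex.
move: Ey; rewrite mulmx1 mulmxBr mul_mx_scalar -scalemxAr => Ey.
have y0 : y != 0.
  apply: contraNneq v0 => y0; move/esym/eqP: Ex.
  by rewrite y0 scaler0 scaler_eq0 (negbTE z0) => /eqP->; rewrite row_mx0.
set mu := ((1 + b) - z - b / z) / a.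
exists mu; last by rewrite /mu; field; rewrite z0 a0.
apply/eigenvalueP; exists y => //; move: (y *m M) Ey => w Ey.
apply/matrixP => i j; move/matrixP: Ex => /(_ i j); move/matrixP: Ey => /(_ i j).
rewrite !mxE => Eyij Exij.
have -> : w i j = (x i j + (1 + b) * y i j - z * y i j) / a by rewrite -Eyij; field.
have -> : x i j = - b * y i j / z by rewrite Exij; field.
by rewrite /mu; field; rewrite z0 a0.
Qed.

Section RealMatrices.
Variable R : rcfType.
Local Notation toC := (real_complex R).
Local Notation Re := (@complex.Re R).
Local Notation Im := (@complex.Im R).

Lemma mulmx_trmx_self_ge0 n (v : 'rV[R]_n) : 0 <= (v *m v^T) 0 0.
Proof. by rewrite mxE; apply: sumr_ge0 => k _; rewrite mxE -expr2 sqr_ge0. Qed.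

Lemma mulmx_trmx_self_gt0 n (v : 'rV[R]_n) : v != 0 -> 0 < (v *m v^T) 0 0.
Proof.
move=> v0; rewrite lt_def mulmx_trmx_self_ge0 andbT.
have sq_ge0 k : true -> 0 <= v 0 k * v^T k 0 by rewrite mxE -expr2 sqr_ge0.
apply: contra v0 => /eqP; rewrite mxE => /(psumr_eq0P sq_ge0) sq0.
apply/eqP/matrixP => i j; rewrite (ord1 i) !mxE.
by have /eqP := sq0 j isT; rewrite mxE -expr2 sqrf_eq0 => /eqP.
Qed.

Lemma map_Re_mulmx_real k n p (y : 'M[R[i]]_(k, n)) (Q : 'M[R]_(n, p)) :
  map_mx Re (y *m map_mx toC Q) = map_mx Re y *m Q.
Proof.
apply/matrixP => i j; rewrite !mxE (raddf_sum (Re : Rcomplex R -> R)).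
by apply: eq_bigr => l _; rewrite !mxE; case: (y i l) => a b /=; rewrite mulr0 subr0.
Qed.

Lemma map_Im_mulmx_real k n p (y : 'M[R[i]]_(k, n)) (Q : 'M[R]_(n, p)) :
  map_mx Im (y *m map_mx toC Q) = map_mx Im y *m Q.
Proof.
apply/matrixP => i j; rewrite !mxE (raddf_sum (Im : Rcomplex R -> R)).
by apply: eq_bigr => l _; rewrite !mxE; case: (y i l) => a b /=; rewrite mulr0 add0r.
Qed.

(* Symmetry gives [<y1 Q, y2> = <y2 Q, y1>], i.e. [q (|y1|^2 + |y2|^2) = 0]. *)
Lemma sym_mx_rotation_eq0 n (Q : 'M[R]_n) (y1 y2 : 'rV_n) (p q : R) :
  Q^T = Q -> y1 *m Q = p *: y1 - q *: y2 -> y2 *m Q = q *: y1 + p *: y2 ->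
  (y1 != 0) || (y2 != 0) -> q = 0.
Proof.
move=> sQ E1 E2 y12.
have pos : 0 < (y1 *m y1^T) 0 0 + (y2 *m y2^T) 0 0.
  have := mulmx_trmx_self_ge0 y1; have := mulmx_trmx_self_ge0 y2.
  by case/orP: y12 => /mulmx_trmx_self_gt0; lra.
have trC (u v : 'rV[R]_n) : u *m v^T = v *m u^T.
  apply/matrixP => i j; rewrite (ord1 i) (ord1 j).
  by rewrite -[v *m u^T]trmxK trmx_mul trmxK [RHS]mxE.
have : y1 *m Q *m y2^T = y2 *m Q *m y1^T by rewrite -mulmxA -[in Q *m _]sQ -trmx_mul trC.
rewrite E1 E2 mulmxBl mulmxDl -!scalemxAl [y2 *m y1^T]trC => /matrixP/(_ 0 0).
move: pos; move: (y1 *m y1^T) (y2 *m y2^T) (y1 *m y2^T) => d11 d22 d12 pos.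
rewrite !mxE => key.
have : q * (d11 0 0 + d22 0 0) = 0 by nra.
by move/eqP; rewrite mulf_eq0 (gt_eqF pos) orbF => /eqP.
Qed.

Lemma eigenvalue_sym_real n (Q : 'M[R]_n) (mu : R[i]) :
  Q^T = Q -> eigenvalue (map_mx toC Q) mu -> exists2 lam, mu = toC lam & eigenvalue Q lam.
Proof.
move=> sQ /eigenvalueP[y Ey y0]; case: mu Ey => p q Ey.
set y1 := map_mx Re y; set y2 := map_mx Im y.
have E1 : y1 *m Q = p *: y1 - q *: y2.
  rewrite -map_Re_mulmx_real Ey; apply/matrixP => i j; rewrite !mxE.
  by case: (y i j) => a b.
have E2 : y2 *m Q = q *: y1 + p *: y2.
  rewrite -map_Im_mulmx_real Ey; apply/matrixP => i j; rewrite !mxE.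
  by case: (y i j) => a b /=; rewrite addrC.
have y12 : (y1 != 0) || (y2 != 0).
  apply: contraR y0; rewrite negb_or !negbK => /andP[/eqP y10 /eqP y20].
  apply/eqP/matrixP => i j; move/matrixP: y10 => /(_ i j); move/matrixP: y20 => /(_ i j).
  by rewrite !mxE; case: (y i j) => a b /= -> ->.
have q0 := sym_mx_rotation_eq0 sQ E1 E2 y12.
exists p; first by rewrite q0.
apply/eigenvalueP; case/orP: y12 => ?; [exists y1 | exists y2] => //.
  by rewrite E1 q0 scale0r subr0.
by rewrite E2 q0 scale0r add0r.
Qed.

End RealMatrices.

Section MomentumRate.
Variable R : rcfType.
Local Notation toC := (real_complex R).

Lemma map_state_mx (alpha beta : R) n (Q : 'M[R]_n) :
  map_mx toC (state_mx alpha beta 0 Q) =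
  block_mx 0 1%:M (- toC beta)%:M ((1 + toC beta)%:M - toC alpha *: map_mx toC Q).
Proof.
rewrite /state_mx map_block_mx map_mx0 map_mx1 mul0r scale0r addr0 addr0 mul1r.
by rewrite map_mxB map_mxZ !map_scalar_mx rmorphN rmorphD rmorph1.
Qed.

(* Non-real roots are conjugate, of squared modulus [c rho^2 <= rho^2]; real roots lie in
   [[-rho, rho]] since the quadratic is nonnegative at [rho] and [-rho] and [|b| <= 2 rho]. *)
Lemma normc_quadratic_root_le (rho c b : R) (z : R[i]) :
  0 < rho -> -1 <= c <= 1 -> `|b| <= rho * (1 + c) ->
  z ^+ 2 + toC b * z + toC (c * rho ^+ 2) = 0 -> Normc.normc z <= rho.
Proof.
move=> rho0 /andP[c_ge c_le]; rewrite ler_norml => /andP[b_ge b_le].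
case: z => x y /(congr1 (fun w => (complex.Re w, complex.Im w))) /= [ERe EIm].
rewrite -[X in _ <= X](ger0_norm (ltW rho0)) -sqrtr_sqr ler_sqrt ?sqr_ge0 //.
have rc_le : rho * (1 + c) <= rho * 2 by apply: ler_wpM2l; [exact: ltW | lra].
have [y0 | y_neq0] := eqVneq y 0.
  move: ERe; rewrite y0 => ERe.
  have x_le : x <= rho.
    rewrite leNgt; apply/negP => x_gt.
    have : 0 < (x - rho) * (x + rho + b) by apply: mulr_gt0; lra.
    have : 0 <= rho * (rho * (1 + c) + b) by apply: mulr_ge0; lra.
    nra.
  have x_ge : - rho <= x.
    rewrite leNgt; apply/negP => x_lt.
    have : 0 < (- rho - x) * (rho - x - b) by apply: mulr_gt0; lra.
    have : 0 <= rho * (rho * (1 + c) - b) by apply: mulr_ge0; lra.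
    nra.
  nra.
have bx : b = - (2 * x).
  have : y * (2 * x + b) = 0 by rewrite -EIm; ring.
  by move/eqP; rewrite mulf_eq0 (negbTE y_neq0) /= => /eqP ?; lra.
have -> : x ^+ 2 + y ^+ 2 = c * rho ^+ 2 by rewrite bx in ERe; nra.
nra.
Qed.

Lemma momentum_achieves_rate (alpha c rho m L : R) :
  alpha != 0 -> 0 < rho -> -1 <= c <= 1 ->
  (forall lam, m <= lam <= L -> `|alpha * lam - (1 + c * rho ^+ 2)| <= rho * (1 + c)) ->
  achieves_rate alpha (c * rho ^+ 2) 0 rho m L.
Proof.
move=> alpha0 rho0 c_bnd near n Q q [sQ _ eigQ _ _] z; rewrite map_state_mx => eigz.
have [-> | z0] := eqVneq z 0; first by rewrite Normc.normc0 ltW.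
have alphaC0 : toC alpha != 0 by rewrite fmorph_eq0.
have [mu eigmu Ez] := eigenvalue_companion_block alphaC0 z0 eigz.
have [lam mu_lam /eigQ lam_in] := eigenvalue_sym_real sQ eigmu.
apply: (normc_quadratic_root_le rho0 c_bnd (near _ lam_in)).
by rewrite -Ez mu_lam rmorphB rmorphD rmorphM rmorph1.
Qed.

End MomentumRate.

Section MomentumVariance.
Variables (R : rcfType) (sigma_w alpha beta : R).
Local Notation J := (Jhat sigma_w alpha beta 0).

Lemma Jhat_momentum lam :
  J lam = sigma_w ^+ 2 * (1 + beta)
          / ((1 - beta) * ((1 + beta) ^+ 2 - (alpha * lam - (1 + beta)) ^+ 2)).
Proof.
rewrite /Jhat /d_ /l_ /h_ /a_ /b_ !(mul0r, subr0, addr0, mul1r).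
set e := alpha * lam - (1 + beta).
have -> : sigma_w ^+ 2 * (beta + e + 1 + (beta - e + 1)) =
          2 * (sigma_w ^+ 2 * (1 + beta)) by ring.
have -> : 2 * (beta + e + 1) * (1 - beta) * (beta - e + 1) =
          2 * ((1 - beta) * ((1 + beta) ^+ 2 - e ^+ 2)) by ring.
by rewrite -mulf_div divff ?mul1r ?pnatr_eq0.
Qed.

Lemma Jhat_momentum_eq lam mu :
  `|alpha * lam - (1 + beta)| = `|alpha * mu - (1 + beta)| -> J lam = J mu.
Proof.
rewrite !Jhat_momentum => e_eq.
by rewrite -(real_normK (num_real (alpha * lam - _))) e_eq real_normK ?num_real.
Qed.

Lemma Jhat_momentum_le lam mu : beta < 1 ->
  `|alpha * lam - (1 + beta)| <= `|alpha * mu - (1 + beta)| < 1 + beta -> J lam <= J mu.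
Proof.
move=> beta_lt1 /andP[]; rewrite !Jhat_momentum.
set e := alpha * lam - _; set e' := alpha * mu - _; set s := 1 + beta => e_le e'_lt.
have s_pos : 0 < s := le_lt_trans (normr_ge0 _) e'_lt.
have sq_le : e ^+ 2 <= e' ^+ 2.
  by rewrite -(real_normK (num_real e)) -(real_normK (num_real e')) ler_sqr ?nnegrE.
have sq_lt : e' ^+ 2 < s ^+ 2.
  by rewrite -(real_normK (num_real e')) ltr_sqr ?nnegrE ?(ltW s_pos).
have h_pos : 0 < 1 - beta by rewrite subr_gt0.
have D_pos x : x ^+ 2 < s ^+ 2 -> (1 - beta) * (s ^+ 2 - x ^+ 2) \is Num.pos.
  by move=> x_lt; rewrite posrE mulr_gt0 ?subr_gt0.
apply: ler_wpM2l; first by rewrite mulr_ge0 ?sqr_ge0 ?ltW.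
rewrite lef_pV2 ?D_pos ?(le_lt_trans sq_le) //.
by apply: ler_wpM2l; [exact: ltW | apply: lerB].
Qed.

Lemma Jhat_momentum_center lam :
  alpha * lam = 1 + beta -> J lam = sigma_w ^+ 2 / ((1 + beta) * (1 - beta)).
Proof.
rewrite Jhat_momentum => ->; rewrite subrr expr0n subr0.
have [-> | s_neq0] := eqVneq (1 + beta) 0; first by rewrite !(mulr0, mul0r, invr0).
have [-> | h_neq0] := eqVneq (1 - beta) 0; first by rewrite !(mulr0, mul0r, invr0).
by field; rewrite s_neq0 h_neq0.
Qed.

End MomentumVariance.

Section TunedParameters.
Variable R : rcfType.

Definition momentum_c (kappa rho : R) :=
  (kappa - (1 + rho) / (1 - rho)) / (rho * (kappa + (1 + rho) / (1 - rho))).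

(* The lower bound amounts to [1 <= kappa], the upper one to
   [sqrt kappa <= (1 + rho) / (1 - rho)], i.e. to the settling-time hypothesis. *)
Lemma momentum_c_bounds kappa rho : 1 <= kappa -> 0 < rho < 1 ->
  (Num.sqrt kappa + 1) / 2 <= 1 / (1 - rho) -> -1 <= momentum_c kappa rho <= 1.
Proof.
move=> kappa_ge1 /andP[rho_gt0 rho_lt1] settling.
have rho'_neq0 : 1 - rho != 0 by rewrite subr_eq0 eq_sym lt_eqF.
rewrite /momentum_c; set r := (1 + rho) / (1 - rho) in settling *.
have r_pos : 0 < r by rewrite divr_gt0 ?subr_gt0 //; lra.
have r_rho : r * (1 - rho) = 1 + rho by rewrite divfK.
have sqrt_le : Num.sqrt kappa <= r.
  have : 1 / (1 - rho) = (r + 1) / 2 by rewrite /r; field.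
  lra.
have kappa_le : kappa <= r ^+ 2.
  have := sqrtr_ge0 kappa; have := sqr_sqrtr (le_trans ler01 kappa_ge1); nra.
have kappa_pos : 0 < kappa := lt_le_trans ltr01 kappa_ge1.
rewrite ler_pdivlMr ?ler_pdivrMr ?mulr_gt0 ?addr_gt0 // mulN1r mul1r.
apply/andP; split; first nra.
have r2_rho : r ^+ 2 * (1 - rho) = r * (1 + rho) by rewrite -r_rho; ring.
nra.
Qed.

Variables (m L rho : R).
Hypotheses (m_gt0 : 0 < m) (m_le_L : m <= L) (rho_in : 0 < rho < 1).
Hypothesis settling : (Num.sqrt (L / m) + 1) / 2 <= 1 / (1 - rho).
Local Notation c := (momentum_c (L / m) rho).
Local Notation alpha := ((1 + rho) * (1 + c * rho) / L).
Local Notation beta := (c * rho ^+ 2).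
Local Notation delta := (rho * (1 + c)).

Let L_gt0 : 0 < L := lt_le_trans m_gt0 m_le_L.

Lemma tuned_c_bounds : -1 <= c <= 1.
Proof. by apply: momentum_c_bounds; rewrite // ler_pdivlMr // mul1r. Qed.

Lemma tuned_alpha_L : alpha * L = 1 + beta + delta.
Proof. by rewrite divfK ?gt_eqF //; ring. Qed.

Lemma tuned_alpha_m : alpha * m = 1 + beta - delta.
Proof.
case/andP: rho_in => rho_gt0 rho_lt1.
have rho'_pos : 0 < 1 - rho by rewrite subr_gt0.
have rho1_pos : 0 < 1 + rho by rewrite addr_gt0.
have D_neq0 : L * (1 - rho) + (1 + rho) * m != 0 by rewrite gt_eqF ?addr_gt0 ?mulr_gt0.
rewrite /momentum_c; field.
by rewrite D_neq0 !(gt_eqF rho'_pos, gt_eqF m_gt0, gt_eqF rho_gt0, gt_eqF L_gt0).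
Qed.

Lemma tuned_alpha_gt0 : 0 < alpha.
Proof.
have /andP[c_ge _] := tuned_c_bounds; case/andP: rho_in => rho_gt0 rho_lt1.
by rewrite divr_gt0 // mulr_gt0; nra.
Qed.

Lemma tuned_delta_bounds : 0 <= delta < 1 + beta.
Proof.
have /andP[c_ge _] := tuned_c_bounds; case/andP: rho_in => rho_gt0 _.
rewrite -subr_gt0 -tuned_alpha_m mulr_gt0 ?tuned_alpha_gt0 // andbT.
by apply: mulr_ge0; lra.
Qed.

Lemma tuned_spread lam : m <= lam <= L -> `|alpha * lam - (1 + beta)| <= delta.
Proof.
have alpha_ge0 := ltW tuned_alpha_gt0.
case/andP=> /(ler_wpM2l alpha_ge0) lam_ge /(ler_wpM2l alpha_ge0) lam_le.
by move: lam_ge lam_le; rewrite tuned_alpha_m tuned_alpha_L ler_norml => ? ?; lra.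
Qed.

Lemma tuned_spread_m : `|alpha * m - (1 + beta)| = delta.
Proof.
have /andP[delta_ge0 _] := tuned_delta_bounds.
by rewrite tuned_alpha_m addrAC subrr add0r normrN ger0_norm.
Qed.

Lemma tuned_spread_L : `|alpha * L - (1 + beta)| = delta.
Proof.
have /andP[delta_ge0 _] := tuned_delta_bounds.
by rewrite tuned_alpha_L addrAC subrr add0r ger0_norm.
Qed.

Lemma tuned_alpha_mid : alpha * ((m + L) / 2) = 1 + beta.
Proof.
have -> : alpha * ((m + L) / 2) = (alpha * m + alpha * L) / 2 by ring.
by rewrite tuned_alpha_m tuned_alpha_L; field.
Qed.

Lemma tuned_Jhat_m sigma_w :
  Jhat sigma_w alpha beta 0 m
  = sigma_w ^+ 2 * (L / m + 1) / (2 * (1 - beta) * (1 + rho) * (1 + c * rho)).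
Proof.
have /andP[delta_ge0 delta_lt] := tuned_delta_bounds.
have /andP[c_ge c_le] := tuned_c_bounds; case/andP: rho_in => rho_gt0 rho_lt1.
have beta'_neq0 : 1 - beta != 0 by rewrite gt_eqF // subr_gt0; nra.
have am_neq0 : 1 + beta - delta != 0 by rewrite gt_eqF // subr_gt0.
have cr_neq0 : 1 + c * rho != 0 by rewrite gt_eqF //; nra.
have rho1_neq0 : 1 + rho != 0 by rewrite gt_eqF // addr_gt0.
have kappa1 : L / m + 1 = 2 * (1 + beta) / (1 + beta - delta).
  have -> : 2 * (1 + beta) = alpha * m + alpha * L.
    by rewrite tuned_alpha_m tuned_alpha_L; ring.
  rewrite -tuned_alpha_m; field.
  by rewrite cr_neq0 rho1_neq0 !gt_eqF.
have sq_neq0 : (1 + beta) ^+ 2 - delta ^+ 2 != 0.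
  by rewrite gt_eqF // subr_gt0 ltr_sqr ?nnegrE // ltW // (le_lt_trans delta_ge0).
rewrite Jhat_momentum tuned_alpha_m kappa1 addrAC subrr add0r sqrrN; field.
by rewrite cr_neq0 rho1_neq0 beta'_neq0 am_neq0 sq_neq0.
Qed.

End TunedParameters.

Theorem lemma4 (R : rcfType) (m L rho sigma_w : R) :
  0 < m -> m <= L -> 0 < rho -> rho < 1 -> 0 <= sigma_w ->
  (Num.sqrt (L / m) + 1) / 2 <= 1 / (1 - rho) ->
  let kappa := L / m in
  let c := (kappa - (1 + rho) / (1 - rho))
             / (rho * (kappa + (1 + rho) / (1 - rho))) in
  let alpha := (1 + rho) * (1 + c * rho) / L in
  let beta := c * rho ^+ 2 in
  let gamma := 0 in
  let J := Jhat sigma_w alpha beta gamma in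
  let lamhat := (m + L) / 2 in
  [/\ -1 <= c <= 1,
      achieves_rate alpha beta gamma rho m L,
      [/\ (forall lam, m <= lam <= L -> J lam <= J m),
      J m = J L &
      J m = sigma_w ^+ 2 * (kappa + 1)
              / (2 * (1 - c * rho ^+ 2) * (1 + rho) * (1 + c * rho))] &
      (forall lam, m <= lam <= L -> J lamhat <= J lam) /\ J lamhat = sigma_w ^+ 2 / ((1 + c * rho ^+ 2) * (1 - c * rho ^+ 2))].
Proof.
move=> m_gt0 m_le_L rho_gt0 rho_lt1 _ settling kappa c alpha beta gamma J lamhat.
have rho_in : 0 < rho < 1 by rewrite rho_gt0.
have c_bnd : -1 <= c <= 1 := tuned_c_bounds m_gt0 m_le_L rho_in settling.
have /andP[_ delta_lt] := tuned_delta_bounds m_gt0 m_le_L rho_in settling.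
have spread := tuned_spread m_gt0 m_le_L rho_in settling.
have spread_m := tuned_spread_m m_gt0 m_le_L rho_in settling.
have beta_lt1 : beta < 1 by case/andP: c_bnd => _ c_le; rewrite /beta; nra.
split => //.
- apply: momentum_achieves_rate c_bnd spread => //.
  by rewrite gt_eqF // (tuned_alpha_gt0 m_gt0 m_le_L rho_in settling).
- split; last exact: tuned_Jhat_m m_gt0 m_le_L rho_in settling sigma_w.
  + move=> lam /spread lam_spread; apply: Jhat_momentum_le => //.
    by rewrite spread_m lam_spread delta_lt.
  + by apply: Jhat_momentum_eq; rewrite spread_m (tuned_spread_L m_gt0 m_le_L rho_in settling).
- have mid := tuned_alpha_mid m_gt0 m_le_L rho_in.
  split; last exact: Jhat_momentum_center mid.
  move=> lam /spread lam_spread; apply: Jhat_momentum_le => //.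
  by rewrite mid subrr normr0 normr_ge0 (le_lt_trans lam_spread).
Qed.
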